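(* For positive integers $d,n$ let $P^{d,n}$ be the class of simple graphs on $n$ vertices that admit a faithful orthogonal representation in $\mathbb{R}^d$. The graph property $P^{d,n}$ is not monotone-decreasing: there exist $d, n$, a graph $G \in P^{d,n}$ and an edge $uv$ of $G$ such that the graph $G \setminus uv$ obtained by deleting the edge $uv$ is not in $P^{d,n}$.
   Context: All graphs are finite, simple and undirected. A faithful orthogonal representation of a graph $G$ in $\mathbb{R}^d$ is an assignment of unit vectors $v \mapsto |v\rangle \in \mathbb{R}^d$ to the vertices such that two vertices are adjacent iff their vectors are orthogonal, and distinct vertices are assigned distinct vectors. A graph property is monotone-decreasing if it is closed under removal of edges (and vertices). *)

From HB Require Import structures.
From mathcomp Require Import all_boot all_order all_algebra.
From mathcomp Require Import Rstruct.
From Stdlib Require Rdefinitions.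
Notation R := Rdefinitions.R.

Set Implicit Arguments.
Unset Strict Implicit.
Unset Printing Implicit Defensive.

Import Order.TTheory GRing.Theory Num.Theory.
Local Open Scope ring_scope.

Definition simple_graph (n : nat) (adj : rel 'I_n) : Prop :=
  (forall x y, adj x y = adj y x) /\ (forall x, adj x x = false).

Definition dotv (d : nat) (u v : 'rV[R]_d) : R := \sum_(k < d) u 0 k * v 0 k.

Definition faithful_orth_rep (d n : nat) (adj : rel 'I_n)
    (f : 'I_n -> 'rV[R]_d) : Prop :=
  [/\ (forall x, dotv (f x) (f x) = 1),
      (forall x y, x != y -> (adj x y <-> dotv (f x) (f y) = 0)) &
      injective f].

Definition inP (d n : nat) (adj : rel 'I_n) : Prop :=
  simple_graph adj /\ exists f : 'I_n -> 'rV[R]_d, @faithful_orth_rep d n adj f.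

Definition delete_edge (n : nat) (adj : rel 'I_n) (u v : 'I_n) : rel 'I_n :=
  fun x y => adj x y && ~~ (((x == u) && (y == v)) || ((x == v) && (y == u))).

(* The 4-cycle is realised in R^2 by the vectors e1, e2, -e1, -e2 (opposite
   vertices are parallel, adjacent ones orthogonal).  Deleting one of its edges
   leaves the path a - b - c - e, which has no faithful representation in R^2:
   there the vectors orthogonal to a nonzero vector form a line, so a is
   parallel to c and e to b, whence a is orthogonal to e and the deleted edge
   reappears. *)
From mathcomp Require Import all_boot all_order all_algebra.
From mathcomp Require Import Rstruct.
From mathcomp Require Import ring lra.

Import Order.TTheory GRing.Theory Num.Theory.
Local Open Scope ring_scope.

Lemma dotv2E (u v : 'rV[R]_2) : dotv u v = u 0 0 * v 0 0 + u 0 1 * v 0 1.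
Proof.
rewrite /dotv !big_ord_recl big_ord0 addr0.
by have -> : lift ord0 ord0 = 1 :> 'I_2 by apply: val_inj.
Qed.

Definition rot90 (u : 'rV[R]_2) : 'rV[R]_2 :=
  \row_(k < 2) (if k == 0 then - u 0 1 else u 0 0).

Lemma dotv2_orth_chain (a b c e : 'rV[R]_2) :
  dotv b b != 0 -> dotv c c != 0 ->
  dotv a b = 0 -> dotv b c = 0 -> dotv c e = 0 -> dotv a e = 0.
Proof.
move=> nzb nzc ab0 bc0 ce0.
(* Expand a in the orthogonal basis (b, rot90 b) and e in (c, rot90 c). *)
have expand : dotv b b * dotv c c * dotv a e =
    dotv a b * (dotv c e * dotv b c + dotv e (rot90 c) * dotv b (rot90 c))
  + dotv a (rot90 b) * (dotv c e * dotv (rot90 b) c + dotv e (rot90 c) * dotv b c).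
  by rewrite !dotv2E !mxE /=; ring.
move: expand; rewrite ab0 bc0 ce0 !(mul0r, mulr0, add0r) => /eqP.
by rewrite !mulf_eq0 (negPf nzb) (negPf nzc) => /eqP.
Qed.

Lemma inP2_path3_adj (n : nat) (adj : rel 'I_n) (a b c e : 'I_n) :
  @inP 2 n adj -> a != b -> b != c -> c != e -> a != e ->
  adj a b -> adj b c -> adj c e -> adj a e.
Proof.
move=> [_ [f [unit_f orth_f _]]] ab bc ce ae adj_ab adj_bc adj_ce.
apply/(orth_f a e ae); apply: (dotv2_orth_chain _ (f b) (f c)).
- by rewrite unit_f oner_neq0.
- by rewrite unit_f oner_neq0.
- exact/(orth_f a b ab).
- exact/(orth_f b c bc).
- exact/(orth_f c e ce).
Qed.

(* The 4-cycle 0 - 1 - 2 - 3 - 0: two vertices are adjacent iff their parities differ. *)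
Definition cycle4 : rel 'I_4 := fun x y => odd (x + y).

Definition cycle4_rep (x : 'I_4) : 'rV[R]_2 :=
  \row_(k < 2) nth 0 (if k == 0 then [:: 1; 0; -1; 0] else [:: 0; 1; 0; -1]) x.

Lemma cycle4_inP : @inP 2 4 cycle4.
Proof.
split.
  split => [x y | x]; first by rewrite /cycle4 addnC.
  by rewrite /cycle4 addnn odd_double.
exists cycle4_rep; split.
- by case=> [[|[|[|[|m]]]] ?] //; rewrite dotv2E !mxE /=; lra.
- case=> [[|[|[|[|m]]]] ?] //; case=> [[|[|[|[|k]]]] ?] //;
  rewrite dotv2E !mxE /cycle4 /= => _; split => //; lra.
- move=> x y /matrixP eq_xy.
  have := eq_xy 0 0; have := eq_xy 0 1; rewrite !mxE /= => {eq_xy}.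
  case: x => [[|[|[|[|m]]]] ?] //; case: y => [[|[|[|[|k]]]] ?] //=;
  (by move=> _ _; apply: val_inj) || (move=> ? ?; exfalso; lra).
Qed.

Theorem mainTheorem3 :
  exists (d n : nat), (0 < d)%N /\ (0 < n)%N /\
    exists (adj : rel 'I_n) (u v : 'I_n),
      @inP d n adj /\ adj u v /\ ~ @inP d n (delete_edge adj u v).
Proof.
pose v0 := @Ordinal 4 0 isT; pose v1 := @Ordinal 4 1 isT.
pose v2 := @Ordinal 4 2 isT; pose v3 := @Ordinal 4 3 isT.
exists 2%N, 4%N; split => //; split => //.
exists cycle4, v0, v3; split; first exact: cycle4_inP.
split => // path_inP.
have := @inP2_path3_adj _ _ v0 v1 v2 v3 path_inP.
by move=> /(_ isT isT isT isT isT isT isT).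
Qed.
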